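(* Let $P$ and $N$ be holomorphic polynomial mappings on $\mathbb{C}^n$ (with values in finite-dimensional spaces) and let $r=\|P\|^2-\|N\|^2$. Then $r\in\mathcal{Q}$ if and only if there exist a holomorphic polynomial mapping $B$, not identically zero, and a linear mapping $L$ such that $I-L^*L$ is non-negative definite and $B\otimes N=L(B\otimes P)$.
   Context: $\mathcal{Q}$ is the set of Hermitian symmetric polynomials $r$ on $\mathbb{C}^n$ for which there are holomorphic polynomial mappings $F,G$, $G\not\equiv 0$, with $r(z,\overline z)=\|F(z)\|^2/\|G(z)\|^2$. For mappings $B$ and $P$ with values in $\mathbb{C}^a$, $\mathbb{C}^b$, $B\otimes P$ denotes the $\mathbb{C}^a\otimes\mathbb{C}^b$-valued mapping $z\mapsto B(z)\otimes P(z)$ (components $B_iP_j$), so $\|B\otimes P\|^2=\|B\|^2\|P\|^2$. *)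

From HB Require Import structures.
From mathcomp Require Import all_boot all_order all_algebra.
From mathcomp Require Import reals.
From mathcomp.real_closed Require Import complex.
From mathcomp Require Import mpoly.
Set Implicit Arguments. Unset Strict Implicit. Unset Printing Implicit Defensive.
Import GRing.Theory Num.Theory Num.Def.
Local Open Scope ring_scope.

(* A holomorphic polynomial mapping C^n -> C^k is a k-tuple of polynomials
   in the n complex variables z_1..z_n: F : 'I_k -> {mpoly C[n]}. *)

Section Defs.
Variable C : numClosedFieldType.

Definition peval n k (F : 'I_k -> {mpoly C[n]}) (z : 'I_n -> C) : 'cV[C]_k :=
  \col_i (F i).@[z].

Definition normsq k (v : 'cV[C]_k) : C := \sum_i v i 0 * (v i 0)^*.

(* tensor product u (x) v in C^a (x) C^b = C^(a*b), components u_i v_j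
   (ordered via mxvec) *)
Definition tens a b (u : 'cV[C]_a) (v : 'cV[C]_b) : 'cV[C]_(a * b) :=
  (mxvec (u *m v^T))^T.

Definition pmap_nonzero n k (F : 'I_k -> {mpoly C[n]}) : Prop :=
  exists i, F i != 0.

(* membership of the function z |-> r(z, conj z) in the class Q:
   r = ||F||^2 / ||G||^2 (wherever ||G|| != 0) for polynomial mappings F, G
   with G not identically zero *)
Definition inQ n (r : ('I_n -> C) -> C) : Prop :=
  exists (k l : nat) (F : 'I_k -> {mpoly C[n]}) (G : 'I_l -> {mpoly C[n]}),
    pmap_nonzero G /\
    forall z, normsq (peval G z) != 0 ->
      r z = normsq (peval F z) / normsq (peval G z).

Definition adjmx m p (A : 'M[C]_(m, p)) : 'M[C]_(p, m) := map_mx conjC A^T.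

Definition nonneg_definite m (A : 'M[C]_m) : Prop :=
  forall v : 'cV[C]_m, 0 <= (adjmx v *m A *m v) 0 0.

End Defs.

(* Write r = ||P||^2 - ||N||^2.  If r = ||F||^2 / ||G||^2, then G (x) P and
   (G (x) N, F) have the same norm wherever G does not vanish.  Restricted to a
   complex line, ||G||^2 times the difference of these squared norms is a
   polynomial in s and conj s, hence a polynomial in two independent variables
   that vanishes identically; since ||G||^2 is a nonzero factor, the two maps
   have the same Hermitian inner products, so one is the image of the other
   under a contraction U, and L is the upper block of U.  Conversely, factor
   I - L^* L = K^* K; then F := K (B (x) P) satisfies
   ||F||^2 = ||B (x) P||^2 - ||B (x) N||^2 = ||B||^2 r. *)

From HB Require Import structures.
From mathcomp Require Import all_boot all_order all_algebra.
From mathcomp Require Import reals.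
From mathcomp.real_closed Require Import complex.
From mathcomp Require Import mpoly.
From mathcomp Require Import ring zify.
From mathcomp Require boolp.
Import Order.TTheory GRing.Theory Num.Theory Num.Def.
Local Open Scope ring_scope.
Set Implicit Arguments. Unset Strict Implicit. Unset Printing Implicit Defensive.

Section HermitianForms.
Variable C : numClosedFieldType.

(* [normsq v] is convertible to [hdot v v]. *)
Definition hdot m (u v : 'cV[C]_m) : C := \sum_i u i 0 * (v i 0)^*.

Lemma adjmxK m p (A : 'M[C]_(m, p)) : adjmx (adjmx A) = A.
Proof. by apply/matrixP => i j; rewrite !mxE conjCK. Qed.

Lemma adjmxM m p q (A : 'M[C]_(m, p)) (B : 'M[C]_(p, q)) :
  adjmx (A *m B) = adjmx B *m adjmx A.
Proof. by rewrite /adjmx trmx_mul map_mxM. Qed.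

Lemma adjmxB m p (A B : 'M[C]_(m, p)) : adjmx (A - B) = adjmx A - adjmx B.
Proof. by rewrite /adjmx linearB map_mxB. Qed.

Lemma adjmx1 m : adjmx (1%:M : 'M[C]_m) = 1%:M.
Proof. by rewrite /adjmx trmx1 map_mx1. Qed.

Lemma adjmx_invmx m (A : 'M[C]_m) : adjmx (invmx A) = invmx (adjmx A).
Proof. by rewrite /adjmx trmx_inv map_invmx. Qed.

Lemma normsqE m (v : 'cV[C]_m) : normsq v = (adjmx v *m v) 0 0.
Proof. by rewrite mxE; apply: eq_bigr => i _; rewrite !mxE mulrC. Qed.

Lemma normsq_ge0 m (v : 'cV[C]_m) : 0 <= normsq v.
Proof. by apply: sumr_ge0 => i _; rewrite -normCK exprn_ge0. Qed.

Lemma normsq_eq0 m (v : 'cV[C]_m) : normsq v = 0 -> v = 0.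
Proof.
move=> /eqP; rewrite psumr_eq0 => [/allP v0|i _]; last by rewrite -normCK exprn_ge0.
apply/matrixP => i j; rewrite ord1 mxE.
by have /implyP/(_ isT) := v0 i (mem_index_enum i); rewrite mul_conjC_eq0 => /eqP.
Qed.

Lemma normsq_col_mx m p (u : 'cV[C]_m) (v : 'cV[C]_p) :
  normsq (col_mx u v) = normsq u + normsq v.
Proof.
rewrite /normsq big_split_ord /=.
by congr (_ + _); apply: eq_bigr => i _; rewrite ?col_mxEu ?col_mxEd.
Qed.

Lemma normsq_mulmx m p (A : 'M[C]_(m, p)) x :
  normsq (A *m x) = (adjmx x *m (adjmx A *m A) *m x) 0 0.
Proof. by rewrite normsqE adjmxM !mulmxA. Qed.

Lemma quad_form_defect m p (A : 'M[C]_(m, p)) x :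
  (adjmx x *m (1%:M - adjmx A *m A) *m x) 0 0 = normsq x - normsq (A *m x).
Proof.
have subE (M N : 'M[C]_1) : (M - N) 0 0 = M 0 0 - N 0 0 by rewrite !mxE.
by rewrite mulmxBr mulmxBl mulmx1 subE -normsqE normsq_mulmx.
Qed.

Lemma nonneg_definite_gram m p (W : 'M[C]_(m, p)) : nonneg_definite (adjmx W *m W).
Proof. by move=> x; rewrite -normsq_mulmx normsq_ge0. Qed.

Lemma nonneg_definite_defect_usubmx m1 m2 p (U : 'M[C]_(m1 + m2, p)) :
  nonneg_definite (1%:M - adjmx U *m U) ->
  nonneg_definite (1%:M - adjmx (usubmx U) *m usubmx U).
Proof.
move=> U_defect x; have := U_defect x; rewrite !quad_form_defect !subr_ge0.
move/(le_trans _); apply; rewrite -{2}(vsubmxK U) mul_col_mx normsq_col_mx.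
by rewrite lerDl normsq_ge0.
Qed.

Lemma quad_form_delta m (A : 'M[C]_m) i :
  let e : 'cV[C]_m := delta_mx i 0 in (adjmx e *m A *m e) 0 0 = A i i.
Proof.
rewrite /=; have -> : adjmx (delta_mx i 0 : 'cV[C]_m) = delta_mx 0 i.
  by apply/matrixP => k l; rewrite !mxE; case: eqP; case: eqP; rewrite ?conjC1 ?conjC0.
by rewrite -mulmxA -colE -rowE !mxE.
Qed.

(* A Hermitian non-negative matrix is a Gram matrix: diagonalize it by the
   spectral theorem and take square roots of the (non-negative) eigenvalues. *)
Lemma nonneg_definite_factor m (M : 'M[C]_m) :
  adjmx M = M -> nonneg_definite M -> exists K : 'M[C]_m, M = adjmx K *m K.
Proof.
move=> M_herm M_ge0.
have : M \is normalmx.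
  by apply/normalmxP; change (M *m adjmx M = adjmx M *m M); rewrite M_herm.
move=> /orthomx_spectralP; rewrite invmx_unitary ?spectral_unitarymx //.
set P := spectralmx M; set d := spectral_diag M => ME.
have PK p (X : 'M[C]_(p, m)) : X *m P *m adjmx P = X.
  by rewrite -mulmxA (unitarymxP (spectral_unitarymx M)) mulmx1.
have d_ge0 i : 0 <= d 0 i.
  have := M_ge0 (adjmx P *m delta_mx i 0).
  rewrite adjmxM adjmxK ME !mulmxA !PK.
  by rewrite quad_form_delta mxE eqxx mulr1n.
exists (diag_mx (map_mx sqrtC d) *m P).
rewrite {1}ME adjmxM mulmxA; congr (_ *m _); rewrite -mulmxA; congr (_ *m _).
apply/matrixP => i j; rewrite mul_mx_diag !mxE rmorphMn /=.
have [->|_] := eqVneq j i; last by rewrite !mulr0n mul0r.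
have sqrt_d_ge0 : 0 <= sqrtC (d 0 i) by rewrite sqrtC_ge0.
by rewrite !mulr1n (conj_Creal (ger0_real sqrt_d_ge0)) -expr2 sqrtCK.
Qed.

End HermitianForms.

Section Tensors.
Variable C : numClosedFieldType.

Lemma big_mxvec_index a b (F : 'I_(a * b) -> C) :
  \sum_k F k = \sum_i \sum_j F (mxvec_index i j).
Proof.
rewrite pair_big /=.
have index_bij : bijective (fun p : 'I_a * 'I_b => mxvec_index p.1 p.2).
  apply: inj_card_bij; last by rewrite card_prod !card_ord.
  by move=> [i j] [i' j'] /= /(congr1 val) /= /val_inj /enum_rank_inj.
by rewrite (reindex _ (onW_bij _ index_bij)).
Qed.

Lemma normsq_tens a b (u : 'cV[C]_a) (v : 'cV[C]_b) :
  normsq (tens u v) = normsq u * normsq v.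
Proof.
rewrite /normsq /tens big_mxvec_index big_distrl /=; apply: eq_bigr => i _.
rewrite big_distrr /=; apply: eq_bigr => j _.
by rewrite !mxE mxvecE !mxE big_ord1 !mxE rmorphM /= mulrACA.
Qed.

Lemma tens0 a b (v : 'cV[C]_b) : tens (0 : 'cV[C]_a) v = 0.
Proof. by rewrite /tens mul0mx linear0 trmx0. Qed.

End Tensors.

Section PolynomialMaps.
Variables (C : numClosedFieldType) (n : nat).
Local Notation mpoly := {mpoly C[n]}.

Definition tensp a b (B : 'I_a -> mpoly) (P : 'I_b -> mpoly) : 'I_(a * b) -> mpoly :=
  fun k => mxvec (\matrix_(i, j) (B i * P j)) 0 k.

Definition colp k l (F : 'I_k -> mpoly) (G : 'I_l -> mpoly) : 'I_(k + l) -> mpoly :=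
  fun i => match split i with inl j => F j | inr j => G j end.

Definition mulmxp m k (A : 'M[C]_(m, k)) (F : 'I_k -> mpoly) : 'I_m -> mpoly :=
  fun i => \sum_j A i j *: F j.

Lemma peval_tensp a b (B : 'I_a -> mpoly) (P : 'I_b -> mpoly) z :
  peval (tensp B P) z = tens (peval B z) (peval P z).
Proof.
apply/matrixP => k j; rewrite ord1 /tens /tensp !mxE.
by case/mxvec_indexP: k => i l; rewrite !mxvecE !mxE big_ord1 !mxE mevalM.
Qed.

Lemma peval_colp k l (F : 'I_k -> mpoly) (G : 'I_l -> mpoly) z :
  peval (colp F G) z = col_mx (peval F z) (peval G z).
Proof.
apply/matrixP => i j; rewrite -(splitK i) /colp.
by case: (split i) => i'; rewrite ?col_mxEu ?col_mxEd !mxE unsplitK.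
Qed.

Lemma peval_mulmxp m k (A : 'M[C]_(m, k)) (F : 'I_k -> mpoly) z :
  peval (mulmxp A F) z = A *m peval F z.
Proof.
apply/matrixP => i j; rewrite !mxE /mulmxp raddf_sum; apply: eq_bigr => l _.
by rewrite /= mevalZ !mxE.
Qed.

Lemma eq_peval k (F : 'I_k -> mpoly) z1 z2 : z1 =1 z2 -> peval F z1 = peval F z2.
Proof. by move=> z12; apply/matrixP => i j; rewrite !mxE (meval_eq _ z12). Qed.

End PolynomialMaps.

Section ConjugateVanishing.
Variable C : numClosedFieldType.

Lemma poly_eq0_on_inj (p : {poly C}) (x : nat -> C) :
  injective x -> (forall t, p.[x t] = 0) -> p = 0.
Proof.
move=> x_inj px0; apply/eqP; apply: contraT => p_neq0.
have roots : all (root p) (map x (iota 0 (size p))).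
  by apply/allP => _ /mapP [t _ ->]; rewrite /root px0.
have := max_poly_roots p_neq0 roots; rewrite map_inj_uniq ?iota_uniq //.
by rewrite size_map size_iota ltnn => /(_ isT).
Qed.

Lemma sum_coef_eq0 N (c : nat -> nat -> C) (deg : nat -> nat -> nat) (x : nat -> C) :
    injective x ->
    (forall t, \sum_(j < N) \sum_(k < N) c j k * x t ^+ deg j k = 0) ->
  forall e, \sum_(j < N) \sum_(k < N) c j k * (deg j k == e)%:R = 0.
Proof.
move=> x_inj vanish e.
pose p := \sum_(j < N) \sum_(k < N) c j k *: 'X^(deg j k).
have -> : \sum_(j < N) \sum_(k < N) c j k * (deg j k == e)%:R = p`_e.
  rewrite coef_sum; apply: eq_bigr => j _; rewrite coef_sum; apply: eq_bigr => k _.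
  by rewrite coefZ coefXn eq_sym.
suff -> : p = 0 by rewrite coef0.
apply: (poly_eq0_on_inj x_inj) => t; rewrite -(vanish t) horner_sum.
apply: eq_bigr => j _; rewrite horner_sum; apply: eq_bigr => k _.
by rewrite hornerZ hornerXn.
Qed.

Lemma natr_inj : injective (fun t : nat => t%:R : C).
Proof. by move=> t t' /eqP; rewrite eqr_nat => /eqP. Qed.

(* The Cayley transform maps the naturals injectively into the unit circle. *)
Definition cayley (t : nat) : C := (t%:R + 'i) / (t%:R - 'i).

Lemma cayley_den_neq0 (t : nat) : ((t%:R + 'i) * (t%:R - 'i) : C) != 0.
Proof.
have -> : (t%:R + 'i) * (t%:R - 'i) = t%:R ^+ 2 - 'i ^+ 2 :> C by ring.
by rewrite sqrCi opprK gt_eqF // ltr_wpDl ?exprn_ge0 ?ler0n ?ltr01.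
Qed.

Lemma cayley_unit t : cayley t * (cayley t)^* = 1.
Proof.
have := cayley_den_neq0 t; rewrite mulf_eq0 negb_or => /andP[tDi tBi].
rewrite /cayley rmorphM /= fmorphV /= rmorphB rmorphD /= rmorph_nat conjCi opprK.
by field; rewrite tDi tBi.
Qed.

Lemma cayley_inj : injective cayley.
Proof.
move=> t t' /eqP; rewrite /cayley.
have := cayley_den_neq0 t; have := cayley_den_neq0 t'.
rewrite !mulf_eq0 !negb_or => /andP[_ t'Bi] /andP[_ tBi].
rewrite eqr_div // => /eqP cross; apply/natr_inj/eqP.
have : ('i *+ 2) * (t'%:R - t%:R) = 0 :> C.
  by rewrite -[LHS]subr0 -(subrr ((t%:R + 'i) * (t'%:R - 'i))) {2}cross; ring.
by move/eqP; rewrite mulf_eq0 mulrn_eq0 /= (negbTE (neq0Ci C)) subr_eq0 eq_sym.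
Qed.

Definition horner2 (K : {poly {poly C}}) (x y : C) := (K.[x%:P]).[y].

Lemma horner2M (K1 K2 : {poly {poly C}}) x y :
  horner2 (K1 * K2) x y = horner2 K1 x y * horner2 K2 x y.
Proof. by rewrite /horner2 !hornerM. Qed.

Lemma horner2B (K1 K2 : {poly {poly C}}) x y :
  horner2 (K1 - K2) x y = horner2 K1 x y - horner2 K2 x y.
Proof. by rewrite /horner2 !(hornerD, hornerN). Qed.

Lemma horner2E (K : {poly {poly C}}) x y N :
    (size K <= N)%N -> (forall j, (size K`_j)%R <= N)%N ->
  horner2 K x y = \sum_(j < N) \sum_(k < N) (K`_j)`_k * x ^+ j * y ^+ k.
Proof.
move=> sizeK sizeKj; rewrite /horner2 (horner_coef_wide _ sizeK) horner_sum.
apply: eq_bigr => j _; rewrite -rmorphXn hornerM hornerC (horner_coef_wide _ (sizeKj j)).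
by rewrite mulr_suml; apply: eq_bigr => k _; ring.
Qed.

Lemma sum_bidegree_diag N (a : nat -> nat -> C) j0 k0 : (j0 < N)%N -> (k0 < N)%N ->
  \sum_(j < N) \sum_(k < N) a j k * (j + k == j0 + k0)%N%:R * (j + j == j0 + j0)%N%:R
  = a j0 k0.
Proof.
move=> j0N k0N.
rewrite (bigD1 (Ordinal j0N)) //= [X in _ + X]big1 ?addr0 => [|j /eqP j_neq]; last first.
  apply: big1 => k _; suff -> : (j + j == j0 + j0)%N = false by rewrite mulr0.
  by apply/eqP => jj; apply: j_neq; apply: val_inj => /=; lia.
rewrite (bigD1 (Ordinal k0N)) //= [X in _ + X]big1 ?addr0 => [|k /eqP k_neq]; last first.
  suff -> : (j0 + k == j0 + k0)%N = false by rewrite mulr0 mul0r.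
  by apply/eqP => jk; apply: k_neq; apply: val_inj => /=; lia.
by rewrite !eqxx !mulr1.
Qed.

Lemma poly2_eq0_conj (K : {poly {poly C}}) : (forall s, horner2 K s s^* = 0) -> K = 0.
Proof.
move=> K0.
pose N := maxn (size K) (\max_(j < size K) (size K`_j)%R).
have sizeK : (size K <= N)%N by rewrite leq_maxl.
have sizeKj j : ((size K`_j)%R <= N)%N.
  have [jK|Kj] := ltnP j (size K); last by rewrite nth_default // size_poly0.
  exact: leq_trans (leq_bigmax (Ordinal jK)) (leq_maxr _ _).
pose a j k := (K`_j)`_k.
have K0E s : \sum_(j < N) \sum_(k < N) a j k * s ^+ j * s^* ^+ k = 0.
  by rewrite -(horner2E _ _ sizeK sizeKj) K0.
(* Scaling s along a ray separates the total degrees j + k ... *)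
have total_degree u e : u * u^* = 1 ->
    \sum_(j < N) \sum_(k < N) a j k * u ^+ j * u^* ^+ k * (j + k == e)%N%:R = 0.
  move=> u_unit.
  apply: (@sum_coef_eq0 N (fun j k => a j k * u ^+ j * u^* ^+ k) (fun j k => j + k)%N
           _ natr_inj) => t.
  rewrite -[RHS](K0E (t%:R * u)); apply: eq_bigr => j _; apply: eq_bigr => k _.
  by rewrite rmorphM /= rmorph_nat !exprMn exprD; ring.
(* ... and on the unit circle, where s^* = s^-1, the bidegrees of a fixed total degree. *)
have bidegree e j0 :
    \sum_(j < N) \sum_(k < N) a j k * (j + k == e)%N%:R * (j + j == j0 + j0)%N%:R = 0.
  apply: (@sum_coef_eq0 N (fun j k => a j k * (j + k == e)%N%:R) (fun j _ => j + j)%N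
           _ cayley_inj) => t.
  rewrite -[RHS](mulr0 (cayley t ^+ e)) -[X in _ = _ * X](total_degree _ e (cayley_unit t)).
  rewrite mulr_sumr.
  apply: eq_bigr => j _; rewrite mulr_sumr; apply: eq_bigr => k _.
  have [<-|_] := eqVneq (j + k)%N e; last by rewrite !mulr0 !mul0r.
  set u := cayley t; have uk : u ^+ k * u^* ^+ k = 1.
    by rewrite -exprMn cayley_unit expr1n.
  by rewrite !mulr1 !exprD -[LHS]mulr1 -uk; ring.
have a0 j0 k0 : (j0 < N)%N -> (k0 < N)%N -> a j0 k0 = 0.
  by move=> j0N k0N; rewrite -(sum_bidegree_diag a j0N k0N) bidegree.
apply/polyP => j; rewrite coef0; apply/polyP => k; rewrite coef0.
have [jN|Nj] := ltnP j N; last by rewrite (nth_default _ (leq_trans sizeK Nj)) coef0.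
have [kN|Nk] := ltnP k N; last by rewrite (nth_default _ (leq_trans (sizeKj j) Nk)).
exact: a0.
Qed.

End ConjugateVanishing.

Section Polarization.
Variables (C : numClosedFieldType) (n : nat).
Local Notation mpoly := {mpoly C[n]}.

Definition hermp k (q : 'I_k -> {poly C}) : {poly {poly C}} :=
  \sum_i map_poly polyC (q i) * (map_poly conjC (q i))%:P.

Lemma horner2_hermp k (q : 'I_k -> {poly C}) x y :
  horner2 (hermp q) x y^* = \sum_i (q i).[x] * ((q i).[y])^*.
Proof.
rewrite /horner2 /hermp !horner_sum; apply: eq_bigr => i _.
by rewrite hornerM hornerC (horner_map polyC) hornerM hornerC (horner_map conjC).
Qed.

Definition linept (z w : 'I_n -> C) (s : C) : 'I_n -> C := fun j => z j + s * (w j - z j).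

Definition linep (z w : 'I_n -> C) : 'I_n -> {poly C} := fun j => (z j)%:P + (w j - z j) *: 'X.

Lemma horner_linep z w (F : mpoly) s : (mmap polyC (linep z w) F).[s] = F.@[linept z w s].
Proof.
rewrite /mmap mevalE horner_sum; apply: eq_bigr => m _.
rewrite hornerM hornerC /mmap1 horner_prod; congr (_ * _); apply: eq_bigr => i _.
by rewrite horner_exp /linep hornerD hornerC hornerZ hornerX /linept mulrC.
Qed.

(* The Hermitian polynomial (x, y) |-> <F(z + x (w - z)), F(z + y (w - z))> of
   two complex variables, made holomorphic in y by conjugating its coefficients. *)
Definition line_hermp k (F : 'I_k -> mpoly) z w : {poly {poly C}} :=
  hermp (fun i => mmap polyC (linep z w) (F i)).

Lemma horner2_line_hermp k (F : 'I_k -> mpoly) z w x y :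
  horner2 (line_hermp F z w) x y^* = hdot (peval F (linept z w x)) (peval F (linept z w y)).
Proof.
by rewrite horner2_hermp; apply: eq_bigr => i _; rewrite !horner_linep !mxE.
Qed.

Lemma polarization m p l (f : 'I_m -> mpoly) (g : 'I_p -> mpoly) (G : 'I_l -> mpoly) :
    (forall v, normsq (peval G v) * (normsq (peval f v) - normsq (peval g v)) = 0) ->
  forall z w, normsq (peval G z) != 0 ->
  hdot (peval f z) (peval f w) = hdot (peval g z) (peval g w).
Proof.
move=> Gfg0 z w Gz_neq0.
have at0 : linept z w 0 =1 z by move=> j; rewrite /linept mul0r addr0.
have at1 : linept z w 1 =1 w by move=> j; rewrite /linept mul1r addrC subrK.
have prod0 : line_hermp G z w * (line_hermp f z w - line_hermp g z w) = 0.
  apply: poly2_eq0_conj => s.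
  by rewrite horner2M horner2B !horner2_line_hermp; apply: Gfg0.
have HG_neq0 : line_hermp G z w != 0.
  apply: contra_neq Gz_neq0 => HG0.
  have := horner2_line_hermp G z w 0 0; rewrite HG0 /horner2 !horner0.
  by rewrite (eq_peval G at0) => ->.
move: prod0 => /eqP; rewrite mulf_eq0 (negbTE HG_neq0) subr_eq0 => /eqP Hfg.
have := horner2_line_hermp f z w 0 1; rewrite Hfg horner2_line_hermp.
by rewrite !(eq_peval _ at0) !(eq_peval _ at1).
Qed.

End Polarization.

Lemma ex_max_bounded (P : nat -> Prop) m :
  P 0%N -> (forall r, P r -> (r <= m)%N) -> exists r, P r /\ forall r', P r' -> (r' <= r)%N.
Proof.
elim: m => [|m IHm] P0 P_le; first by exists 0%N; split=> // r /P_le.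
have [Pm|nPm] := boolp.pselect (P m.+1); first by exists m.+1.
apply: IHm => // r Pr; have := P_le r Pr; rewrite leq_eqVlt ltnS => /orP[/eqP rE|//].
by rewrite rE in Pr.
Qed.

Section PartialIsometry.
Variable C : numClosedFieldType.

Definition colsmx (T : Type) d q (h : T -> 'cV[C]_d) (pts : 'I_q -> T) : 'M[C]_(d, q) :=
  \matrix_(k, j) h (pts j) k 0.

Definition snoc_pts (T : Type) q (pts : 'I_q -> T) (s : T) : 'I_(q + 1) -> T :=
  fun k => match split k with inl i => pts i | inr _ => s end.

Lemma colsmx_snoc (T : Type) d q (h : T -> 'cV[C]_d) (pts : 'I_q -> T) s :
  colsmx h (snoc_pts pts s) = row_mx (colsmx h pts) (h s).
Proof.
apply/matrixP => k j; rewrite -(splitK j) /snoc_pts.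
by case: (split j) => i; rewrite ?row_mxEl ?row_mxEr !mxE unsplitK ?ord1.
Qed.

Lemma gram_colsmx (T : Type) d q (h : T -> 'cV[C]_d) (pts : 'I_q -> T) :
  adjmx (colsmx h pts) *m colsmx h pts = \matrix_(i, j) hdot (h (pts j)) (h (pts i)).
Proof.
by apply/matrixP => i j; rewrite !mxE; apply: eq_bigr => k _; rewrite !mxE mulrC.
Qed.

Lemma normsq_gram_eq m1 m2 p (A : 'M[C]_(m1, p)) (B : 'M[C]_(m2, p)) x :
  adjmx A *m A = adjmx B *m B -> normsq (A *m x) = normsq (B *m x).
Proof. by move=> AB; rewrite !normsq_mulmx AB. Qed.

Lemma row_free_col_mx m r (A : 'M[C]_(r, m)) (v : 'rV[C]_m) :
  row_free A -> ~~ (v <= A)%MS -> row_free (col_mx A v).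
Proof.
rewrite /row_free => /eqP rankA vA; rewrite eqn_leq rank_leq_row -addsmxE.
have : (A < A + v)%MS by rewrite ltmxE addsmxSl addsmx_sub submx_refl.
by rewrite ltmxErank rankA addn1 => /andP[].
Qed.

Lemma gram_unit m r (A : 'M[C]_(m, r)) : row_free A^T -> adjmx A *m A \in unitmx.
Proof.
move=> A_free; rewrite -row_free_unit; apply: inj_row_free => u uG0.
have adjA_free : row_free (adjmx A) by rewrite /adjmx row_free_map.
have Au0 : A *m adjmx u = 0.
  by apply: normsq_eq0; rewrite normsq_mulmx adjmxK uG0 mul0mx mxE.
apply: (row_free_inj adjA_free); rewrite mul0mx -[u]adjmxK -adjmxM Au0.
by apply/matrixP => i j; rewrite !mxE conjC0.
Qed.

(* B (A^* A)^-1 A^* maps the columns of A to those of B; when A and B have the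
   same Gram matrix it is a contraction, since its defect is the orthogonal
   projection onto the complement of the column space of A. *)
Definition transfermx m p r (A : 'M[C]_(m, r)) (B : 'M[C]_(p, r)) : 'M[C]_(p, m) :=
  B *m invmx (adjmx A *m A) *m adjmx A.

Lemma transfermxK m p r (A : 'M[C]_(m, r)) (B : 'M[C]_(p, r)) :
  adjmx A *m A \in unitmx -> transfermx A B *m A = B.
Proof. by move=> GA; rewrite /transfermx -mulmxA mulmxKV. Qed.

Lemma transfermx_defect m p r (A : 'M[C]_(m, r)) (B : 'M[C]_(p, r)) :
    adjmx A *m A \in unitmx -> adjmx B *m B = adjmx A *m A ->
  let U := transfermx A B in nonneg_definite (1%:M - adjmx U *m U).
Proof.
set G := adjmx A *m A => G_unit BG U.
have G_herm : adjmx G = G by rewrite adjmxM adjmxK.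
set Pi := A *m invmx G *m adjmx A.
have UU : adjmx U *m U = Pi.
  rewrite /U /transfermx !adjmxM adjmxK adjmx_invmx G_herm !mulmxA.
  by rewrite -(mulmxA _ (adjmx B)) BG mulmxKV.
have Pi_herm : adjmx Pi = Pi by rewrite !adjmxM adjmxK adjmx_invmx G_herm mulmxA.
have Pi_idem : Pi *m Pi = Pi.
  by rewrite /Pi !mulmxA -(mulmxA _ (adjmx A)) -/G mulmxKV.
have -> : 1%:M - adjmx U *m U = adjmx (1%:M - Pi) *m (1%:M - Pi).
  rewrite UU adjmxB adjmx1 Pi_herm mulmxBl mul1mx mulmxBr mulmx1 Pi_idem.
  by rewrite subrr subr0.
exact: nonneg_definite_gram.
Qed.

Lemma hdot_eq_contraction (T : Type) (S : T -> Prop) m p (f : T -> 'cV[C]_m)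
    (g : T -> 'cV[C]_p) :
    (forall s t, S s -> S t -> hdot (f s) (f t) = hdot (g s) (g t)) ->
  exists U : 'M[C]_(p, m),
    (forall s, S s -> U *m f s = g s) /\ nonneg_definite (1%:M - adjmx U *m U).
Proof.
move=> fg_dot.
have gram_eq q (pts : 'I_q -> T) : (forall j, S (pts j)) ->
    adjmx (colsmx f pts) *m colsmx f pts = adjmx (colsmx g pts) *m colsmx g pts.
  by move=> Spts; rewrite !gram_colsmx; apply/matrixP => i j; rewrite !mxE fg_dot.
pose indep r := exists pts : 'I_r -> T, (forall j, S (pts j)) /\ row_free (colsmx f pts)^T.
have indep0 : indep 0%N.
  exists (fun i : 'I_0 => False_rect T (notF (ltn_ord i))); split; first by case.
  by rewrite /row_free (flatmx0 (colsmx f _)^T) mxrank0.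
have indep_le r : indep r -> (r <= m)%N by move=> [pts [_ /eqP <-]]; exact: rank_leq_col.
have [r [[pts [Spts pts_free]] r_max]] := ex_max_bounded indep0 indep_le.
set A := colsmx f pts; set B := colsmx g pts.
have GA_unit := gram_unit pts_free.
exists (transfermx A B); split; last by apply: transfermx_defect; rewrite // gram_eq.
move=> s Ss.
have Spts_s j : S (snoc_pts pts s j) by rewrite /snoc_pts; case: (split j).
have [c fsE] : exists c : 'cV[C]_r, f s = A *m c.
  suff /submxP [c fsE] : ((f s)^T <= A^T)%MS.
    by exists c^T; rewrite -[f s]trmxK fsE trmx_mul trmxK.
  apply: contraT => fs_notin.
  have : indep (r + 1)%N.
    exists (snoc_pts pts s); split => //.
    by rewrite colsmx_snoc tr_row_mx row_free_col_mx.
  by move/r_max; rewrite addn1 ltnn.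
(* (c, -1) kills the columns of f at pts and s, hence those of g (same Gram matrix). *)
have gsE : g s = B *m c.
  have := normsq_gram_eq (col_mx c (- 1%:M)) (gram_eq _ _ Spts_s).
  rewrite !colsmx_snoc !mul_row_col !mulmxN !mulmx1 -fsE subrr.
  rewrite {1}/normsq big1 => [|i _]; last by rewrite mxE mul0r.
  by move=> /esym /normsq_eq0 /eqP; rewrite subr_eq0 => /eqP ->.
by rewrite fsE mulmxA transfermxK.
Qed.

End PartialIsometry.

Section Proposition.
Variables (C : numClosedFieldType) (n : nat).
Local Notation mpoly := {mpoly C[n]}.

Lemma inQ_tens_contraction b c (P : 'I_b -> mpoly) (N : 'I_c -> mpoly) :
  inQ (fun z => normsq (peval P z) - normsq (peval N z)) ->
  exists (a : nat) (B : 'I_a -> mpoly) (L : 'M[C]_(a * c, a * b)),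
    [/\ pmap_nonzero B, nonneg_definite (1%:M - adjmx L *m L) &
        forall z, tens (peval B z) (peval N z) = L *m tens (peval B z) (peval P z)].
Proof.
move=> [k [l [F [G [G_nz rE]]]]].
pose f := tensp G P; pose g := colp (tensp G N) F.
have fg_normsq v : normsq (peval G v) * (normsq (peval f v) - normsq (peval g v)) = 0.
  rewrite peval_colp !peval_tensp normsq_col_mx !normsq_tens.
  have [->|Gv_neq0] := eqVneq (normsq (peval G v)) 0; first by rewrite mul0r.
  by rewrite -[normsq (peval F v)](divfK Gv_neq0) -rE //; ring.
have [U [Uf U_defect]] := hdot_eq_contraction (fun s t Gs _ => polarization fg_normsq t Gs).
exists l, G, (usubmx U); split => //; first exact: nonneg_definite_defect_usubmx.
move=> z; have [/normsq_eq0 ->|Gz_neq0] := eqVneq (normsq (peval G z)) 0.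
  by rewrite !tens0 mulmx0.
by rewrite mul_usub_mx -(peval_tensp G P) -/f Uf // peval_colp col_mxKu peval_tensp.
Qed.

Lemma tens_contraction_inQ a b c (P : 'I_b -> mpoly) (N : 'I_c -> mpoly)
    (B : 'I_a -> mpoly) (L : 'M[C]_(a * c, a * b)) :
  pmap_nonzero B -> nonneg_definite (1%:M - adjmx L *m L) ->
  (forall z, tens (peval B z) (peval N z) = L *m tens (peval B z) (peval P z)) ->
  inQ (fun z => normsq (peval P z) - normsq (peval N z)).
Proof.
move=> B_nz L_defect BNE.
have defect_herm : adjmx (1%:M - adjmx L *m L) = 1%:M - adjmx L *m L.
  by rewrite adjmxB adjmx1 adjmxM adjmxK.
have [K KE] := nonneg_definite_factor defect_herm L_defect.
exists (a * b)%N, a, (mulmxp K (tensp B P)), B; split=> // z Bz_neq0.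
rewrite peval_mulmxp peval_tensp normsq_mulmx -KE quad_form_defect -BNE !normsq_tens.
by field.
Qed.

End Proposition.

Unset Implicit Arguments.

Theorem proposition3p1 (R : realType) (n b c : nat)
  (P : 'I_b -> {mpoly R[i][n]}) (N : 'I_c -> {mpoly R[i][n]}) :
  inQ (fun z => normsq (peval P z) - normsq (peval N z)) <->
  exists (a : nat) (B : 'I_a -> {mpoly R[i][n]}) (L : 'M[R[i]]_(a * c, a * b)),
    [/\ pmap_nonzero B,
        nonneg_definite (1%:M - adjmx L *m L) &
        forall z : 'I_n -> R[i],
          tens (peval B z) (peval N z) = L *m tens (peval B z) (peval P z)].
Proof.
split; first exact: inQ_tens_contraction.
by move=> [a [B [L [B_nz L_defect BNE]]]]; exact: tens_contraction_inQ B_nz L_defect BNE.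
Qed.
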